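(* Consider the following heterogeneous treatment effects model. Let $Y$ be a real-valued outcome (with finite mean), $D\in\{0,1\}$ a binary treatment, and $Z\in\{0,1\}$, $W\in\{0,1\}$ two binary instruments. For $z\in\{0,1\}$, let $D_z\in\{0,1\}$ denote the potential treatment when $Z=z$, and for $d,z\in\{0,1\}$ let $Y_{d,z}$ denote the potential outcome when the instrument is $Z=z$ and the treatment is $d$ (potential outcomes are not indexed by $W$). The observed variables $(Y,D,Z,W)$ are generated by $D=D_1Z+D_0(1-Z)$ and $Y=Y_1D+Y_0(1-D)$, where $Y_d=Y_{d,1}Z+Y_{d,0}(1-Z)$. Define the subgroups always takers $\mathrm{AT}=\{D_1=D_0=1\}$, never takers $\mathrm{NT}=\{D_1=D_0=0\}$ and compliers $\mathrm{CP}=\{D_1=1,D_0=0\}$, and for $G\in\{\mathrm{AT},\mathrm{NT},\mathrm{CP}\}$ and $d\in\{0,1\}$ let $\rho_{G,d}=E[Y_{d,1}-Y_{d,0}\mid G]$. Assume: (i) there exist constants $\rho_1,\rho_0$ such that $\rho_{G,d}=\rho_d$ for all $G\in\{\mathrm{AT},\mathrm{NT},\mathrm{CP}\}$ and $d\in\{0,1\}$; (ii) $D_1\geq D_0$; (iii) $(Z,W)$ is independent of $Y_{d,z}$ conditional on $(D_1,D_0)$ for every $d,z\in\{0,1\}$, and $Z$ is independent of $(D_1,D_0)$ conditional on $W$; (iv) $\Pr(D_1>D_0)>0$; (v) $0<\Pr(Z=z,W=w)<1$ for all $z,w\in\{0,1\}$; (vi) for each $G\in\{\mathrm{AT},\mathrm{NT}\}$,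 $\Pr(G\mid W=1)\Pr(\mathrm{CP}\mid W=0)\neq \Pr(G\mid W=0)\Pr(\mathrm{CP}\mid W=1)$. Then the direct effects $(\rho_1,\rho_0)$ and the local average treatment effect $\mathrm{LATE}=E[Y_1-Y_0\mid \mathrm{CP}]$ are point identified, i.e., they are uniquely determined by the joint distribution of the observed variables $(Y,D,Z,W)$.
   Context: $\Pr(G\mid W=w)$ denotes the probability that $(D_1,D_0)$ belongs to subgroup $G$ conditional on $W=w$. ''Point identified'' means that any two data-generating structures satisfying all the stated assumptions and inducing the same joint distribution of $(Y,D,Z,W)$ yield the same values of $\rho_1$, $\rho_0$ and $\mathrm{LATE}$. *)

From mathcomp Require Import all_boot all_order all_algebra.
From mathcomp Require Import all_classical all_reals all_analysis.
Set Implicit Arguments. Unset Strict Implicit. Unset Printing Implicit Defensive.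
Import Order.TTheory GRing.Theory Num.Theory.
Local Open Scope classical_set_scope.
Local Open Scope ring_scope.

(* Potential outcomes  Y d z = Y_{d,z},  potential treatments
   D z = D_z (D true = D_1, D false = D_0), instruments Z, W : Omega -> bool
   (true = 1, false = 0). *)

Section HTE.
Context {R : realType} {dsp : measure_display} {T : measurableType dsp}.
Variable P : probability T R.

Definition prb (A : set T) : R := fine (P A).

Definition cexp (A : set T) (X : T -> R) : R := Rintegral P A X / prb A.

Variable D : bool -> T -> bool.

Definition ATs : set T := [set w | D true w = true /\ D false w = true].
Definition NTs : set T := [set w | D true w = false /\ D false w = false].
Definition CPs : set T := [set w | D true w = true /\ D false w = false].
Definition typ (c1 c0 : bool) : set T :=
  [set w | D true w = c1 /\ D false w = c0].

Variables (Y : bool -> bool -> T -> R) (Z W : T -> bool).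

Definition Dobs (w : T) : bool := if Z w then D true w else D false w.
Definition Ypot (d : bool) (w : T) : R := Y d (Z w) w.
Definition Yobs (w : T) : R := Ypot (Dobs w) w.

Definition rhoG (G : set T) (d : bool) : R :=
  cexp G (fun w => Y d true w - Y d false w).

Definition LATE : R := cexp CPs (fun w => Ypot true w - Ypot false w).

Definition ev (f : T -> bool) (b : bool) : set T := [set w | f w = b].

Definition prW (G : set T) (w : bool) : R := prb (G `&` ev W w) / prb (ev W w).

Definition hte_assumptions (rho1 rho0 : R) : Prop :=
  (forall d z, measurable_fun setT (Y d z)) /\
  (forall z b, measurable (ev (D z) b)) /\
  (forall b, measurable (ev Z b)) /\
  (forall b, measurable (ev W b)) /\
  (forall d z, P.-integrable setT (fun w => (Y d z w)%:E)) /\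
  (forall d, rhoG ATs d = (if d then rho1 else rho0)) /\
  (forall d, rhoG NTs d = (if d then rho1 else rho0)) /\
  (forall d, rhoG CPs d = (if d then rho1 else rho0)) /\
  (forall w, D false w ==> D true w) /\
  (* (iii-a) (Z,W) independent of Y_{d,z} conditionally on (D_1, D_0) *)
  (forall d z (B : set R), measurable B -> forall z' w' c1 c0,
     prb (ev Z z' `&` ev W w' `&` (Y d z @^-1` B) `&` typ c1 c0)
       * prb (typ c1 c0)
     = prb (ev Z z' `&` ev W w' `&` typ c1 c0)
       * prb ((Y d z @^-1` B) `&` typ c1 c0)) /\
  (* (iii-b) Z independent of (D_1, D_0) conditionally on W *)
  (forall z c1 c0 w',
     prb (ev Z z `&` typ c1 c0 `&` ev W w') * prb (ev W w')
     = prb (ev Z z `&` ev W w') * prb (typ c1 c0 `&` ev W w')) /\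
  (0 < prb CPs) /\
  (forall z w', 0 < prb (ev Z z `&` ev W w') < 1) /\
  (prW ATs true * prW CPs false != prW ATs false * prW CPs true) /\
  (prW NTs true * prW CPs false != prW NTs false * prW CPs true).

End HTE.

(* Equality of the joint distributions of the observed (Y, D, Z, W) of two
   structures: agreement on the generating pi-system {Y in B, D=d, Z=z, W=w}
   of the product sigma-algebra on R x bool x bool x bool. *)
Definition same_obs_law {R : realType}
  {d1 : measure_display} {T1 : measurableType d1} (P1 : probability T1 R)
  (Y1 : T1 -> R) (D1 Z1 W1 : T1 -> bool)
  {d2 : measure_display} {T2 : measurableType d2} (P2 : probability T2 R)
  (Y2 : T2 -> R) (D2 Z2 W2 : T2 -> bool) : Prop :=
  forall (B : set R), measurable B -> forall d z w,
    P1 [set t | B (Y1 t) /\ D1 t = d /\ Z1 t = z /\ W1 t = w]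
    = P2 [set t | B (Y2 t) /\ D2 t = d /\ Z2 t = z /\ W2 t = w].

(* Monotonicity makes the observed cells {D = 1, Z = 0} and {D = 0, Z = 1} pure
   always-taker and never-taker cells, while {D = 1, Z = 1} mixes always takers
   with compliers and {D = 0, Z = 0} never takers with compliers.  By the two
   conditional independence assumptions, the probability of a type G inside the
   cell {Z = z, W = w} is Pr(Z = z, W = w) Pr(G | W = w), and the integral of
   Y_{d,z'} over it is that probability times E[Y_{d,z'} | G].  Hence the shares
   Pr(G | W = w) are read off the observed cell probabilities, and the difference
   of the normalised integrals of Y over the two treated cells is
   Pr(AT | W = w) rho_1 + Pr(CP | W = w) E[Y_{1,1} | CP].  Assumption (vi) makes the
   two equations (w = 0, 1) uniquely solvable; the untreated cells give rho_0 and
   E[Y_{0,0} | CP] in the same way, and LATE is a combination of these because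
   E[Y_{1,0} | CP] = E[Y_{1,1} | CP] - rho_1 and E[Y_{0,1} | CP] = E[Y_{0,0} | CP] + rho_0. *)

From mathcomp Require Import all_boot all_order all_algebra.
From mathcomp Require Import all_classical all_reals all_analysis.
From mathcomp Require Import measurable_realfun ring.
Set Implicit Arguments. Unset Strict Implicit. Unset Printing Implicit Defensive.
Import Order.TTheory GRing.Theory Num.Theory.
Local Open Scope classical_set_scope.
Local Open Scope ring_scope.

Lemma uniq_solution_2x2 (R : idomainType) (a c b : bool -> R) (r x r' x' : R) :
  a true * c false != a false * c true ->
  (forall w, a w * r + c w * x = b w) -> (forall w, a w * r' + c w * x' = b w) ->
  r = r' /\ x = x'.
Proof.
move=> det sol sol'.
have e w : a w * (r - r') + c w * (x - x') = 0.
  by rewrite !mulrBr addrACA -opprD sol sol' subrr.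
have det_neq0 : a true * c false - a false * c true != 0 by rewrite subr_eq0.
split; apply/eqP; rewrite -subr_eq0; apply/eqP; apply: (mulfI det_neq0); rewrite mulr0.
- transitivity (c false * (a true * (r - r') + c true * (x - x')) -
                c true * (a false * (r - r') + c false * (x - x'))); first by ring.
  by rewrite !e !mulr0 subrr.
- transitivity (a true * (a false * (r - r') + c false * (x - x')) -
                a false * (a true * (r - r') + c true * (x - x'))); first by ring.
  by rewrite !e !mulr0 subrr.
Qed.

Lemma integral_mscale {R : realType} {d : measure_display} {T : measurableType d}
    (m : {measure set T -> \bar R}) (D : set T) (k : {nonneg R}) (f : T -> \bar R) :
  measurable D -> m.-integrable D f ->
  (\int[mscale k m]_(x in D) f x = k%:num%:E * \int[m]_(x in D) f x)%E.
Proof.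
move=> mD fi; have /integrableP[mf _] := fi.
have fpos := integrable_fin_num mD (integrable_funepos mD fi).
have fneg := integrable_fin_num mD (integrable_funeneg mD fi).
rewrite [LHS]integralE [in RHS]integralE muleBr //; last exact: fin_num_adde_defr.
rewrite ge0_integral_mscale //; last exact: measurable_funepos.
by rewrite ge0_integral_mscale //; exact: measurable_funeneg.
Qed.

Lemma eq_scaled_integral {R : realType} {d : measure_display} {T : measurableType d}
    (m m' : {measure set T -> \bar R}) (D : set T) (k k' : {nonneg R})
    (f : T -> \bar R) : measurable D ->
  m.-integrable D f -> m'.-integrable D f ->
  (forall A, measurable A -> A `<=` D -> k%:num%:E * m A = k'%:num%:E * m' A)%E ->
  (k%:num%:E * \int[m]_(x in D) f x = k'%:num%:E * \int[m']_(x in D) f x)%E.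
Proof.
move=> mD fi fi' mm'.
by rewrite -(integral_mscale k mD fi) -(integral_mscale k' mD fi'); exact: eq_measure_integral.
Qed.

(* Pushing forward along [pair_mem S X] turns the integral of [X] over [S] into an
   integral against a measure on [R * bool] that only depends on the law of [X]
   restricted to [S]. *)
Definition pair_mem {T R : Type} (S : set T) (X : T -> R) (x : T) : R * bool :=
  (X x, x \in S).

Section pair_mem.
Context {R : realType} {d : measure_display} {T : measurableType d}.
Variables (m : {measure set T -> \bar R}) (S : set T) (X : T -> R).
Hypotheses (mS : measurable S) (mX : measurable_fun setT X).

Let flagged : set (R * bool) := [set: R] `*` [set true].

Let mflagged : measurable flagged.
Proof. exact: measurableX. Qed.

Lemma measurable_pair_mem : measurable_fun setT (pair_mem S X).
Proof.
apply: measurable_fun_pair => //; apply: (measurable_fun_bool true).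
suff -> : [set: T] `&` (fun x => x \in S) @^-1` [set true] = S by [].
by apply/seteqP; split=> x /= => [[_ /set_mem]|/mem_set].
Qed.

Lemma pair_mem_preimage : pair_mem S X @^-1` flagged = S.
Proof. by apply/seteqP; split=> x /= => [[_ /set_mem]|/mem_set]. Qed.

Lemma pushforward_pair_mem (A : set (R * bool)) : A `<=` flagged ->
  pushforward m (pair_mem S X) A = m (S `&` X @^-1` [set r | A (r, true)]).
Proof.
move=> Aflagged; congr (m _); apply/seteqP; split=> x /=.
  move=> Ax; have [_ /= xS] := Aflagged _ Ax.
  by move: Ax; rewrite /pair_mem xS; split=> //; exact: set_mem.
by case=> /mem_set xS; rewrite /pair_mem xS.
Qed.

Lemma integral_pair_mem : m.-integrable S (EFin \o X) ->
  (\int[m]_(x in S) (X x)%:E =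
   \int[pushforward m (pair_mem S X)]_(y in flagged) (y.1)%:E)%E.
Proof.
move=> iX; rewrite (integral_pushforward measurable_pair_mem) ?pair_mem_preimage //.
by apply/measurable_EFinP; exact: measurable_fst.
Qed.

Lemma integrable_pair_mem : m.-integrable S (EFin \o X) ->
  (pushforward m (pair_mem S X)).-integrable flagged (fun y => (y.1)%:E).
Proof.
move=> iX; apply: (integrable_pushforward measurable_pair_mem) => //.
- by apply/measurable_EFinP; exact: measurable_fst.
- by rewrite pair_mem_preimage.
Qed.

End pair_mem.

Lemma Rintegral_eq_of_scaled_laws {R : realType}
    {d1 : measure_display} {T1 : measurableType d1} (m1 : {measure set T1 -> \bar R})
    (S1 : set T1) (X1 : T1 -> R)
    {d2 : measure_display} {T2 : measurableType d2} (m2 : {measure set T2 -> \bar R})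
    (S2 : set T2) (X2 : T2 -> R) (c1 c2 : R) :
  measurable S1 -> measurable_fun setT X1 -> m1.-integrable S1 (EFin \o X1) ->
  measurable S2 -> measurable_fun setT X2 -> m2.-integrable S2 (EFin \o X2) ->
  0 <= c1 -> 0 <= c2 ->
  (forall B : set R, measurable B ->
     c1%:E * m1 (S1 `&` X1 @^-1` B) = c2%:E * m2 (S2 `&` X2 @^-1` B))%E ->
  c1 * Rintegral m1 S1 X1 = c2 * Rintegral m2 S2 X2.
Proof.
move=> mS1 mX1 iX1 mS2 mX2 iX2 c1ge0 c2ge0 laws.
have mflagged : measurable ([set: R] `*` [set true]) by exact: measurableX.
rewrite /Rintegral (integral_pair_mem mS1 mX1 iX1) (integral_pair_mem mS2 mX2 iX2).
(* The measure instance of a pushforward takes the measurability of the map as argument. *)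
have /(_ (measurable_pair_mem mS1 mX1)) fin1 :=
  integrable_fin_num mflagged (integrable_pair_mem mS1 mX1 iX1).
have /(_ (measurable_pair_mem mS2 mX2)) fin2 :=
  integrable_fin_num mflagged (integrable_pair_mem mS2 mX2 iX2).
set I1 := (\int[pushforward m1 _]_(y in _) _)%E in fin1 *.
set I2 := (\int[pushforward m2 _]_(y in _) _)%E in fin2 *.
suff scaled : (c1%:E * I1 = c2%:E * I2)%E by have := congr1 fine scaled; rewrite !fineM.
apply: (eq_scaled_integral (k := NngNum c1ge0) (k' := NngNum c2ge0) mflagged
  (integrable_pair_mem mS1 mX1 iX1) (integrable_pair_mem mS2 mX2 iX2)).
- exact: measurable_pair_mem.
- exact: measurable_pair_mem.
move=> _ _ A mA Aflagged /=; rewrite !pushforward_pair_mem //; apply: laws.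
have mslice : measurable_fun [set: R] (fun r => (r, true)) by exact: measurable_fun_pair.
by have := mslice measurableT A mA; rewrite setTI.
Qed.

Section probability_facts.
Context {R : realType} {d : measure_display} {T : measurableType d}.
Variable P : probability T R.

Lemma prbE (A : set T) : measurable A -> P A = (prb P A)%:E.
Proof. by move=> mA; rewrite /prb fineK // fin_num_measure. Qed.

Lemma prb_ge0 (A : set T) : 0 <= prb P A.
Proof. by rewrite /prb fine_ge0 // measure_ge0. Qed.

Lemma le_prb (A B : set T) : measurable A -> measurable B -> A `<=` B ->
  prb P A <= prb P B.
Proof.
move=> mA mB AB; rewrite -lee_fin -!prbE //.
by apply: le_measure => //; rewrite inE.
Qed.

Lemma prbU (A B : set T) : measurable A -> measurable B -> A `&` B = set0 ->
  prb P (A `|` B) = prb P A + prb P B.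
Proof.
move=> mA mB AB; have : P (A `|` B) = (P A + P B)%E by exact: measureU.
by rewrite !prbE //; [case | exact: measurableU].
Qed.

Definition cond_indep (A : set T) (X : T -> R) (G : set T) :=
  forall B : set R, measurable B ->
    prb P (A `&` X @^-1` B `&` G) * prb P G =
    prb P (A `&` G) * prb P (X @^-1` B `&` G).

Lemma cond_indepU (A1 A2 G : set T) (X : T -> R) :
  measurable A1 -> measurable A2 -> measurable G -> measurable_fun setT X ->
  A1 `&` A2 = set0 -> cond_indep A1 X G -> cond_indep A2 X G ->
  cond_indep (A1 `|` A2) X G.
Proof.
move=> mA1 mA2 mG mX A12 ind1 ind2 B mB.
have mXB : measurable (X @^-1` B) by rewrite -[X @^-1` B]setTI; exact: mX.
rewrite !setIUl !prbU; first by rewrite !mulrDl (ind1 _ mB) (ind2 _ mB).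
all: try by do ![apply: measurableI].
all: by apply: (subsetI_eq0 _ _ A12) => t; rewrite -?setIA => -[].
Qed.

Lemma Rintegral_cond_indep (A G : set T) (X : T -> R) :
  measurable A -> measurable G -> measurable_fun setT X ->
  P.-integrable setT (EFin \o X) -> 0 < prb P G -> cond_indep A X G ->
  Rintegral P (A `&` G) X = prb P (A `&` G) * cexp P G X.
Proof.
move=> mA mG mX iX G_gt0 ind; have mAG := measurableI _ _ mA mG.
have iXS S : measurable S -> P.-integrable S (EFin \o X).
  by move=> mS; exact: integrableS iX.
have scaled := Rintegral_eq_of_scaled_laws mAG mX (iXS _ mAG) mG mX (iXS _ mG)
  (prb_ge0 G) (prb_ge0 (A `&` G)).
apply: (mulfI (lt0r_neq0 G_gt0)); rewrite scaled /cexp; first by field; exact: lt0r_neq0.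
move=> B mB; have mXB : measurable (X @^-1` B) by rewrite -[X @^-1` B]setTI; exact: mX.
suff : ((prb P G)%:E * P (A `&` G `&` X @^-1` B) =
        (prb P (A `&` G))%:E * P (G `&` X @^-1` B))%E by [].
rewrite !prbE; try by do ![apply: measurableI].
by rewrite -!EFinM (setIAC A G) (setIC G) mulrC ind.
Qed.

End probability_facts.

(* The identifying expressions, as functions of the observed
   [p d z w = Pr(D = d, Z = z, W = w)] and [m d z w = E[Y; D = d, Z = z, W = w]]. *)
Section observed_functionals.
Variables (R : fieldType) (p m : bool -> bool -> bool -> R).

Definition zw_mass z w := p true z w + p false z w.
Definition at_share w := p true false w / zw_mass false w.
Definition nt_share w := p false true w / zw_mass true w.
Definition cp_share w := p true true w / zw_mass true w - at_share w.
Definition cp_mass z :=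
  zw_mass z true * cp_share true + zw_mass z false * cp_share false.
Definition treated_contrast w :=
  m true true w / zw_mass true w - m true false w / zw_mass false w.
Definition untreated_contrast w :=
  m false true w / zw_mass true w - m false false w / zw_mass false w.

End observed_functionals.

Lemma evU_true_false {d : measure_display} {T : measurableType d} (f : T -> bool) :
  ev f true `|` ev f false = setT.
Proof. by apply/seteqP; split=> // t _; rewrite /ev /=; case: (f t); [left | right]. Qed.

Lemma evI_true_false {d : measure_display} {T : measurableType d} (f : T -> bool) :
  ev f true `&` ev f false = set0.
Proof. by apply/seteqP; split=> // t [ft]; rewrite /ev /= ft. Qed.

Section observables.
Context {R : realType} {dsp : measure_display} {T : measurableType dsp}.
Variables (P : probability T R) (D : bool -> T -> bool)
  (Y : bool -> bool -> T -> R) (Z W : T -> bool).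

Definition obs_event d z w : set T :=
  [set t | Dobs D Z t = d /\ Z t = z /\ W t = w].
Definition obs_prob d z w := prb P (obs_event d z w).
Definition obs_integral d z w := Rintegral P (obs_event d z w) (Yobs D Y Z).

Lemma obs_eventE d z w : obs_event d z w = ev Z z `&` ev W w `&` ev (D z) d.
Proof.
apply/seteqP; split=> t; rewrite /obs_event /ev /Dobs /=.
  by case=> <- [<- <-]; case: (Z t).
by case=> -[<- <-] <-; case: (Z t).
Qed.

Lemma obs_event_preimage d z w (B : set R) : obs_event d z w `&` Y d z @^-1` B =
  [set t | B (Yobs D Y Z t) /\ Dobs D Z t = d /\ Z t = z /\ W t = w].
Proof.
apply/seteqP; split=> t /=.
  by case=> -[dt [zt wt]]; rewrite /Yobs /Ypot dt zt.
by case=> Bt [dt [zt wt]]; split; [|move: Bt; rewrite /Yobs /Ypot dt zt].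
Qed.

Lemma obs_integralE d z w :
  obs_integral d z w = Rintegral P (obs_event d z w) (Y d z).
Proof. by apply: eq_Rintegral => t /set_mem[dt [zt _]]; rewrite /Yobs /Ypot dt zt. Qed.

End observables.

Lemma obs_prob_eq_of_law {R : realType}
    {d1 : measure_display} {T1 : measurableType d1} (P1 : probability T1 R)
    (Y1 : bool -> bool -> T1 -> R) (D1 : bool -> T1 -> bool) (Z1 W1 : T1 -> bool)
    {d2 : measure_display} {T2 : measurableType d2} (P2 : probability T2 R)
    (Y2 : bool -> bool -> T2 -> R) (D2 : bool -> T2 -> bool) (Z2 W2 : T2 -> bool) :
  same_obs_law P1 (Yobs D1 Y1 Z1) (Dobs D1 Z1) Z1 W1
               P2 (Yobs D2 Y2 Z2) (Dobs D2 Z2) Z2 W2 ->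
  obs_prob P1 D1 Z1 W1 = obs_prob P2 D2 Z2 W2.
Proof.
move=> law; apply/funext=> d; apply/funext=> z; apply/funext=> w.
have := law setT measurableT d z w.
by rewrite -!obs_event_preimage !preimage_setT !setIT /obs_prob /prb => ->.
Qed.

Section model.
Context {R : realType} {dsp : measure_display} {T : measurableType dsp}.
Variables (P : probability T R) (D : bool -> T -> bool)
  (Y : bool -> bool -> T -> R) (Z W : T -> bool) (rho1 rho0 : R).
Hypothesis H : hte_assumptions P D Y Z W rho1 rho0.

Let mY d z : measurable_fun setT (Y d z).
Proof. by case: H. Qed.
Let mD z b : measurable (ev (D z) b).
Proof. by case: H => _ []. Qed.
Let mZ b : measurable (ev Z b).
Proof. by case: H => _ [_ []]. Qed.
Let mW b : measurable (ev W b).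
Proof. by case: H => _ [_ [_ []]]. Qed.
Let iY d z : P.-integrable setT (EFin \o Y d z).
Proof. by case: H => _ [_ [_ [_ [h _]]]]; exact: h. Qed.
Let rho_AT d : rhoG P Y (ATs D) d = if d then rho1 else rho0.
Proof. by case: H => _ [_ [_ [_ [_ []]]]]. Qed.
Let rho_NT d : rhoG P Y (NTs D) d = if d then rho1 else rho0.
Proof. by case: H => _ [_ [_ [_ [_ [_ []]]]]]. Qed.
Let rho_CP d : rhoG P Y (CPs D) d = if d then rho1 else rho0.
Proof. by case: H => _ [_ [_ [_ [_ [_ [_ []]]]]]]. Qed.
Let mono t : D false t ==> D true t.
Proof. by case: H => _ [_ [_ [_ [_ [_ [_ [_ []]]]]]]]. Qed.
Let indep_Y d z z' w c1 c0 :
  cond_indep P (ev Z z' `&` ev W w) (Y d z) (typ D c1 c0).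
Proof. by case: H => _ [_ [_ [_ [_ [_ [_ [_ [_ [h _]]]]]]]]] B mB; exact: h. Qed.
Let indep_Z z c1 c0 w :
  prb P (ev Z z `&` typ D c1 c0 `&` ev W w) * prb P (ev W w) =
  prb P (ev Z z `&` ev W w) * prb P (typ D c1 c0 `&` ev W w).
Proof. by case: H => _ [_ [_ [_ [_ [_ [_ [_ [_ [_ []]]]]]]]]]. Qed.
Let CP_gt0 : 0 < prb P (CPs D).
Proof. by case: H => _ [_ [_ [_ [_ [_ [_ [_ [_ [_ [_ []]]]]]]]]]]. Qed.
Let zw_gt0 z w : 0 < prb P (ev Z z `&` ev W w).
Proof.
by case: H => _ [_ [_ [_ [_ [_ [_ [_ [_ [_ [_ [_ [h _]]]]]]]]]]]]; case/andP: (h z w).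
Qed.
Let det_AT : prW P W (ATs D) true * prW P W (CPs D) false !=
             prW P W (ATs D) false * prW P W (CPs D) true.
Proof. by case: H => _ [_ [_ [_ [_ [_ [_ [_ [_ [_ [_ [_ [_ []]]]]]]]]]]]]. Qed.
Let det_NT : prW P W (NTs D) true * prW P W (CPs D) false !=
             prW P W (NTs D) false * prW P W (CPs D) true.
Proof. by case: H => _ [_ [_ [_ [_ [_ [_ [_ [_ [_ [_ [_ [_ []]]]]]]]]]]]]. Qed.

Let mtyp c1 c0 : measurable (typ D c1 c0).
Proof. exact: measurableI (mD true c1) (mD false c0). Qed.
Let mzw z w : measurable (ev Z z `&` ev W w).
Proof. exact: measurableI. Qed.
Let mzw_typ z w c1 c0 : measurable (ev Z z `&` ev W w `&` typ D c1 c0).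
Proof. exact: measurableI. Qed.
Let mZ_CP z : measurable (ev Z z `&` CPs D).
Proof. exact: measurableI (mZ z) (mtyp true false). Qed.
Let zw_neq0 z w : prb P (ev Z z `&` ev W w) != 0.
Proof. exact: lt0r_neq0. Qed.

Lemma W_gt0 w : 0 < prb P (ev W w).
Proof. by apply: (lt_le_trans (zw_gt0 true w)); apply: le_prb => //; exact: subIsetr. Qed.

Lemma prb_zw_typ z w c1 c0 :
  prb P (ev Z z `&` ev W w `&` typ D c1 c0) =
  prb P (ev Z z `&` ev W w) * prW P W (typ D c1 c0) w.
Proof.
have W_neq0 := lt0r_neq0 (W_gt0 w).
by apply: (mulIf W_neq0); rewrite setIAC indep_Z /prW -mulrA divfK.
Qed.

Lemma prb_gt0_of_prW (G : set T) (a b : R) : measurable G ->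
  prW P W G true * a != prW P W G false * b -> 0 < prb P G.
Proof.
move=> mG; apply: contraR; rewrite -leNgt => G_le0.
have GW0 w : prb P (G `&` ev W w) = 0.
  apply/eqP; rewrite eq_le prb_ge0 andbT (le_trans _ G_le0) //.
  by apply: le_prb; [exact: measurableI | by [] | exact: subIsetl].
by rewrite /prW !GW0 !mul0r.
Qed.

Let AT_gt0 : 0 < prb P (ATs D).
Proof. exact: prb_gt0_of_prW (mtyp true true) det_AT. Qed.
Let NT_gt0 : 0 < prb P (NTs D).
Proof. exact: prb_gt0_of_prW (mtyp false false) det_NT. Qed.

Lemma Rintegral_zw_typ z w c1 c0 d z' : 0 < prb P (typ D c1 c0) ->
  Rintegral P (ev Z z `&` ev W w `&` typ D c1 c0) (Y d z') =
  prb P (ev Z z `&` ev W w) * prW P W (typ D c1 c0) w * cexp P (typ D c1 c0) (Y d z').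
Proof. by move=> typ_gt0; rewrite Rintegral_cond_indep // prb_zw_typ. Qed.

Lemma rhoGE (G : set T) d : measurable G ->
  rhoG P Y G d = cexp P G (Y d true) - cexp P G (Y d false).
Proof.
by move=> mG; rewrite /rhoG /cexp RintegralB ?mulrBl //; exact: integrableS (iY _ _).
Qed.

Lemma ev_D0_true : ev (D false) true = ATs D.
Proof.
apply/seteqP; split=> t; rewrite /ev /ATs /=; last by case.
by move=> D0t; split=> //; move: (mono t); rewrite D0t.
Qed.

Lemma ev_D1_false : ev (D true) false = NTs D.
Proof.
apply/seteqP; split=> t; rewrite /ev /NTs /=; last by case.
by move=> D1t; split=> //; move: (mono t); rewrite D1t; case: (D false t).
Qed.

Lemma ev_D1_true : ev (D true) true = ATs D `|` CPs D.
Proof.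
apply/seteqP; split=> t; rewrite /ev /ATs /CPs /=; last by case=> -[].
by move=> D1t; case: (D false t); [left | right].
Qed.

Lemma ev_D0_false : ev (D false) false = NTs D `|` CPs D.
Proof.
apply/seteqP; split=> t; rewrite /ev /NTs /CPs /=; last by case=> -[].
by move=> D0t; case: (D true t); [right | left].
Qed.

Lemma typ_disjoint c1 c0 c1' c0' : (c1, c0) != (c1', c0') ->
  typ D c1 c0 `&` typ D c1' c0' = set0.
Proof.
move=> neq; apply/seteqP; split=> // t [[e1 e0] [e1' e0']].
by move: neq; rewrite -e1 -e0 e1' e0' eqxx.
Qed.

Let zw_typ_disjoint z w c1 c0 c1' c0' : (c1, c0) != (c1', c0') ->
  (ev Z z `&` ev W w `&` typ D c1 c0) `&` (ev Z z `&` ev W w `&` typ D c1' c0') = set0.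
Proof. by move=> neq; apply: subsetI_eq0 (typ_disjoint neq); exact: subIsetr. Qed.

Lemma measurable_obs_event d z w : measurable (obs_event D Z W d z w).
Proof. by rewrite obs_eventE; exact: measurableI. Qed.

Local Notation p := (obs_prob P D Z W).
Local Notation m := (obs_integral P D Y Z W).
Local Notation q z w := (prb P (ev Z z `&` ev W w)).

Lemma obs_prob_AT w : p true false w = q false w * prW P W (ATs D) w.
Proof. by rewrite /obs_prob obs_eventE ev_D0_true prb_zw_typ. Qed.

Lemma obs_prob_NT w : p false true w = q true w * prW P W (NTs D) w.
Proof. by rewrite /obs_prob obs_eventE ev_D1_false prb_zw_typ. Qed.

Lemma obs_prob_ATCP w :
  p true true w = q true w * (prW P W (ATs D) w + prW P W (CPs D) w).
Proof.
rewrite /obs_prob obs_eventE ev_D1_true setIUr prbU ?zw_typ_disjoint //.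
  by rewrite !prb_zw_typ mulrDr.
all: exact: mzw_typ.
Qed.

Lemma zw_massE z w : zw_mass p z w = q z w.
Proof.
rewrite /zw_mass /obs_prob !obs_eventE -prbU; first by rewrite -setIUr evU_true_false setIT.
- exact: measurableI.
- exact: measurableI.
- by apply: subsetI_eq0 (evI_true_false (D z)); exact: subIsetr.
Qed.

Lemma at_shareE w : at_share p w = prW P W (ATs D) w.
Proof. by rewrite /at_share zw_massE obs_prob_AT mulrAC divff // mul1r. Qed.

Lemma nt_shareE w : nt_share p w = prW P W (NTs D) w.
Proof. by rewrite /nt_share zw_massE obs_prob_NT mulrAC divff // mul1r. Qed.

Lemma cp_shareE w : cp_share p w = prW P W (CPs D) w.
Proof.
by rewrite /cp_share zw_massE obs_prob_ATCP at_shareE mulrAC divff // mul1r addrAC subrr add0r.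
Qed.

Lemma cp_massE z : cp_mass p z = prb P (ev Z z `&` CPs D).
Proof.
rewrite /cp_mass !zw_massE !cp_shareE -!prb_zw_typ -prbU.
- by rewrite !(setIAC (ev Z z) (ev W _)) -setIUr evU_true_false setIT.
- exact: measurableI.
- exact: measurableI.
- by apply: subsetI_eq0 (evI_true_false W) => t [[]].
Qed.

Lemma obs_integral_AT w :
  m true false w = q false w * prW P W (ATs D) w * cexp P (ATs D) (Y true false).
Proof. by rewrite obs_integralE obs_eventE ev_D0_true Rintegral_zw_typ. Qed.

Lemma obs_integral_NT w :
  m false true w = q true w * prW P W (NTs D) w * cexp P (NTs D) (Y false true).
Proof. by rewrite obs_integralE obs_eventE ev_D1_false Rintegral_zw_typ. Qed.

Lemma obs_integral_ATCP w :
  m true true w = q true w * prW P W (ATs D) w * cexp P (ATs D) (Y true true) +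
                  q true w * prW P W (CPs D) w * cexp P (CPs D) (Y true true).
Proof.
rewrite obs_integralE obs_eventE ev_D1_true setIUr Rintegral_setU ?Rintegral_zw_typ //.
- exact: mzw_typ.
- exact: mzw_typ.
- by apply: integrableS (iY _ _) => //; apply: measurableU; exact: mzw_typ.
- by apply/disj_set2P; exact: zw_typ_disjoint.
Qed.

Lemma obs_integral_NTCP w :
  m false false w = q false w * prW P W (NTs D) w * cexp P (NTs D) (Y false false) +
                    q false w * prW P W (CPs D) w * cexp P (CPs D) (Y false false).
Proof.
rewrite obs_integralE obs_eventE ev_D0_false setIUr Rintegral_setU ?Rintegral_zw_typ //.
- exact: mzw_typ.
- exact: mzw_typ.
- by apply: integrableS (iY _ _) => //; apply: measurableU; exact: mzw_typ.
- by apply/disj_set2P; exact: zw_typ_disjoint.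
Qed.

Lemma treated_system w :
  at_share p w * rho1 + cp_share p w * cexp P (CPs D) (Y true true) =
  treated_contrast p m w.
Proof.
have rho1E : rho1 = cexp P (ATs D) (Y true true) - cexp P (ATs D) (Y true false).
  by have := rho_AT true; rewrite (rhoGE _ (mtyp _ _)) => <-.
rewrite at_shareE cp_shareE /treated_contrast !zw_massE.
by rewrite obs_integral_ATCP obs_integral_AT rho1E; field; rewrite !zw_neq0.
Qed.

Lemma untreated_system w :
  nt_share p w * rho0 + cp_share p w * - cexp P (CPs D) (Y false false) =
  untreated_contrast p m w.
Proof.
have rho0E : rho0 = cexp P (NTs D) (Y false true) - cexp P (NTs D) (Y false false).
  by have := rho_NT false; rewrite (rhoGE _ (mtyp _ _)) => <-.
rewrite nt_shareE cp_shareE /untreated_contrast !zw_massE.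
by rewrite obs_integral_NTCP obs_integral_NT rho0E; field; rewrite !zw_neq0.
Qed.

Lemma at_cp_det : at_share p true * cp_share p false != at_share p false * cp_share p true.
Proof. by rewrite !at_shareE !cp_shareE. Qed.

Lemma nt_cp_det : nt_share p true * cp_share p false != nt_share p false * cp_share p true.
Proof. by rewrite !nt_shareE !cp_shareE. Qed.

Lemma integrable_Ypot d : P.-integrable setT (EFin \o Ypot Y Z d).
Proof.
have mZf : measurable_fun setT Z.
  by apply: (measurable_fun_bool true); rewrite setTI; exact: mZ.
have -> : Ypot Y Z d = fun t => if Z t then Y d true t else Y d false t.
  by apply/funext=> t; rewrite /Ypot; case: (Z t).
apply: (le_integrable measurableT (g := fun t => `|(Y d true t)%:E| + `|(Y d false t)%:E|)%E).
- by apply/measurable_EFinP; exact: measurable_fun_ifT.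
- move=> t _; rewrite [leRHS]gee0_abs ?adde_ge0 //=.
  by case: (Z t); [exact: leeDl | exact: leeDr].
- apply: integrableD => //.
  + exact: integrable_abse (iY d true).
  + exact: integrable_abse (iY d false).
Qed.

Lemma cond_indep_Z_CP z d z' : cond_indep P (ev Z z) (Y d z') (CPs D).
Proof.
rewrite -[ev Z z]setIT -(evU_true_false W) setIUr; apply: cond_indepU => //.
- exact: mtyp.
- by apply: subsetI_eq0 (evI_true_false W); exact: subIsetr.
- exact: indep_Y.
- exact: indep_Y.
Qed.

Let CP_split : CPs D = (ev Z true `&` CPs D) `|` (ev Z false `&` CPs D).
Proof. by rewrite -setIUl evU_true_false setTI. Qed.

Lemma Rintegral_CP_Ypot d :
  Rintegral P (CPs D) (Ypot Y Z d) =
  prb P (ev Z true `&` CPs D) * cexp P (CPs D) (Y d true) +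
  prb P (ev Z false `&` CPs D) * cexp P (CPs D) (Y d false).
Proof.
have Z_CP b : Rintegral P (ev Z b `&` CPs D) (Ypot Y Z d) =
              prb P (ev Z b `&` CPs D) * cexp P (CPs D) (Y d b).
  rewrite -Rintegral_cond_indep //.
  - by apply: eq_Rintegral => t /set_mem[Zt _]; rewrite /Ypot Zt.
  - exact: mtyp.
  - exact: cond_indep_Z_CP.
rewrite {1}CP_split Rintegral_setU ?Z_CP //.
- by apply: integrableS (integrable_Ypot d) => //; apply: measurableU; exact: mZ_CP.
- by apply/disj_set2P; apply: subsetI_eq0 (evI_true_false Z); exact: subIsetl.
Qed.

Lemma LATE_identified :
  LATE P D Y Z =
  (cp_mass p true * (cexp P (CPs D) (Y true true) - (cexp P (CPs D) (Y false false) + rho0)) +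
   cp_mass p false * (cexp P (CPs D) (Y true true) - rho1 - cexp P (CPs D) (Y false false))) /
  (cp_mass p true + cp_mass p false).
Proof.
have rho1E : cexp P (CPs D) (Y true false) = cexp P (CPs D) (Y true true) - rho1.
  by have := rho_CP true; rewrite (rhoGE _ (mtyp _ _)) => <-; rewrite opprB addrC subrK.
have rho0E : cexp P (CPs D) (Y false true) = cexp P (CPs D) (Y false false) + rho0.
  by have := rho_CP false; rewrite (rhoGE _ (mtyp _ _)) => <-; rewrite addrC subrK.
have prb_CP : prb P (CPs D) = prb P (ev Z true `&` CPs D) + prb P (ev Z false `&` CPs D).
  rewrite {1}CP_split prbU //.
  by apply: subsetI_eq0 (evI_true_false Z); exact: subIsetl.
rewrite /LATE {1}/cexp RintegralB.
- rewrite !Rintegral_CP_Ypot !cp_massE prb_CP rho1E rho0E.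
  by congr (_ / _); ring.
- exact: mtyp.
- by apply: integrableS (integrable_Ypot true) => //; exact: mtyp.
- by apply: integrableS (integrable_Ypot false) => //; exact: mtyp.
Qed.

End model.

Lemma obs_integral_eq_of_law {R : realType}
    {d1 : measure_display} {T1 : measurableType d1} (P1 : probability T1 R)
    (Y1 : bool -> bool -> T1 -> R) (D1 : bool -> T1 -> bool) (Z1 W1 : T1 -> bool)
    (rho11 rho10 : R)
    {d2 : measure_display} {T2 : measurableType d2} (P2 : probability T2 R)
    (Y2 : bool -> bool -> T2 -> R) (D2 : bool -> T2 -> bool) (Z2 W2 : T2 -> bool)
    (rho21 rho20 : R) :
  hte_assumptions P1 D1 Y1 Z1 W1 rho11 rho10 ->
  hte_assumptions P2 D2 Y2 Z2 W2 rho21 rho20 ->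
  same_obs_law P1 (Yobs D1 Y1 Z1) (Dobs D1 Z1) Z1 W1
               P2 (Yobs D2 Y2 Z2) (Dobs D2 Z2) Z2 W2 ->
  obs_integral P1 D1 Y1 Z1 W1 = obs_integral P2 D2 Y2 Z2 W2.
Proof.
move=> H1 H2 law; apply/funext=> d; apply/funext=> z; apply/funext=> w.
have mO1 := measurable_obs_event H1 d z w; have mO2 := measurable_obs_event H2 d z w.
have [mY1 [_ [_ [_ [iY1 _]]]]] := H1; have [mY2 [_ [_ [_ [iY2 _]]]]] := H2.
rewrite !obs_integralE.
have := Rintegral_eq_of_scaled_laws mO1 (mY1 d z) (integrableS measurableT mO1 (subsetT _) (iY1 d z))
  mO2 (mY2 d z) (integrableS measurableT mO2 (subsetT _) (iY2 d z)) ler01 ler01.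
rewrite !mul1r; apply=> B mB; rewrite !mul1e !obs_event_preimage; exact: law.
Qed.

Theorem theorem1 (R : realType)
  (d1 : measure_display) (T1 : measurableType d1) (P1 : probability T1 R)
  (Y1 : bool -> bool -> T1 -> R) (D1 : bool -> T1 -> bool) (Z1 W1 : T1 -> bool)
  (rho11 rho10 : R)
  (d2 : measure_display) (T2 : measurableType d2) (P2 : probability T2 R)
  (Y2 : bool -> bool -> T2 -> R) (D2 : bool -> T2 -> bool) (Z2 W2 : T2 -> bool)
  (rho21 rho20 : R) :
  hte_assumptions P1 D1 Y1 Z1 W1 rho11 rho10 ->
  hte_assumptions P2 D2 Y2 Z2 W2 rho21 rho20 ->
  same_obs_law P1 (Yobs D1 Y1 Z1) (Dobs D1 Z1) Z1 W1
               P2 (Yobs D2 Y2 Z2) (Dobs D2 Z2) Z2 W2 ->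
  rho11 = rho21 /\ rho10 = rho20 /\
  LATE P1 D1 Y1 Z1 = LATE P2 D2 Y2 Z2.
Proof.
move=> H1 H2 law.
have same_p := obs_prob_eq_of_law law.
have same_m := obs_integral_eq_of_law H1 H2 law.
have treated2 := treated_system H2; rewrite -same_p -same_m in treated2.
have untreated2 := untreated_system H2; rewrite -same_p -same_m in untreated2.
have [rho1_eq E11_eq] := uniq_solution_2x2 (at_cp_det H1) (treated_system H1) treated2.
have [rho0_eq E00_eq] := uniq_solution_2x2 (nt_cp_det H1) (untreated_system H1) untreated2.
split=> //; split=> //.
by rewrite (LATE_identified H1) (LATE_identified H2) same_p rho1_eq rho0_eq E11_eq (oppr_inj E00_eq).
Qed.
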